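(* Let $n,m$ be fixed, $V^*\subset V_1\cap V_2$ fixed, $W$ an obfuscating set and $\mathfrak{o}\in\mathfrak{O}_W$. Let $F=F^{(n,m)}_{c,\theta}$ be a nominatable distribution supported on $\mathcal{G}^a_{n,m}=\{(g_1,g_2)\in\mathcal{G}_n\times\mathcal{G}_m:\mathcal{I}(v;g_2)=\{v\}\text{ for all }v\in V^*\}$. For $(g_1,g_2)\in\mathcal{G}^a_{n,m}$ let $(g_1,[\mathfrak{o}(g_2)])=\{(g_1,\tilde g_2)\in\mathcal{G}^a_{n,m}:\tilde g_2\simeq g_2\}$, and for $w\in W$, $u\in V_2$ let $(g_1,[\mathfrak{o}(g_2)])_{w=\mathfrak{o}(u)}=\{(g_1,\tilde g_2)\in\mathcal{G}^a_{n,m}:\tilde g_2=\sigma(g_2)$ for some isomorphism $\sigma$ with $\sigma(\mathfrak{o}^{-1}(w))=u\}$, and $(g_1,[\mathfrak{o}(g_2)])_{w\in\mathfrak{o}(S)}=\bigcup_{u\in S}(g_1,[\mathfrak{o}(g_2)])_{w=\mathfrak{o}(u)}$ for $S\subset V_2$. Choose representatives $(g_1^{(i)},g_2^{(i)})$, $i\in[h]$, so that the sets $(g_1^{(i)},[\mathfrak{o}(g_2^{(i)})])$ partition $\mathcal{G}^a_{n,m}$, and for $u\in W$ put $P^i_u=\mathbb{P}_F\big((g_1^{(i)},[\mathfrak{o}(g_2^{(i)})])_{u\in\mathfrak{o}(V^* )}\mid(g_1^{(i)},[\mathfrak{o}(g_2^{(i)})])\big)$. Define $\Phi^*(g_1^{(i)},\mathfrak{o}(g_2^{(i)}),V^*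 )$ to be the ordering of $W$ in which, for each $j=1,\dots,m$, the $j$-th element is a maximizer of $P^i_u$ over $u\in W$ not among the first $j-1$ elements (ties broken in a fixed arbitrary manner); and for any other $(g_1,g_2)$ in the class $(g_1^{(i)},[\mathfrak{o}(g_2^{(i)})])$, choose an isomorphism $\sigma$ with $\mathfrak{o}(g_2)=\sigma(\mathfrak{o}(g_2^{(i)}))$ and set $\Phi^*(g_1,\mathfrak{o}(g_2),V^* )=\sigma(\Phi^*(g_1^{(i)},\mathfrak{o}(g_2^{(i)}),V^* ))$. Then for every $k\in[m-1]$ and every VN scheme $\Phi\in\mathcal{V}_{nm}$, $L^{(1)}_k(\Phi^*,V^* )\le L^{(1)}_k(\Phi,V^* )$ and $L^{(2)}_k(\Phi^*,V^* )\le L^{(2)}_k(\Phi,V^* )$; i.e. $\Phi^*$ is level-$k$ Bayes optimal for both losses simultaneously for all $k$.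
   Context: $\mathcal{G}_n$ is the set of labeled graphs on $n$ vertices and $\simeq$ denotes graph isomorphism. A nominatable distribution $F^{(n,m)}_{c,\theta}$ is a distribution on $\mathcal{G}_n\times\mathcal{G}_m$ with vertex sets $V_1=\{v_1,\dots,v_n\}$, $V_2=\{u_1,\dots,u_m\}$, $v_i=u_i$ for $i\le c$ (the core), disjoint junk sets $V_1\setminus C$, $V_2\setminus C$, whose induced subgraphs are conditionally independent given $\theta$. An obfuscating set $W$ is disjoint from $V_1,V_2$; $\mathfrak{O}_W$ is the set of bijections $\mathfrak{o}:V_2\to W$, and $\mathfrak{o}(g_2)$ is $g_2$ with vertices relabeled by $\mathfrak{o}$. For $u\in V(g)$, $\mathcal{I}(u;g)$ is the orbit of $u$ under automorphisms of $g$. A VN scheme $\Phi\in\mathcal{V}_{nm}$ assigns to $(g_1,\mathfrak{o}(g_2),V^* )$ a total ordering of $W$ such that the set of positions of $\mathfrak{o}(\mathcal{I}(u;g_2))$ does not depend on $\mathfrak{o}\in\mathfrak{O}_W$ (for all $g_1,g_2,V^*,u$). With $(G_1,G_2)\sim F$ and $\mathrm{rank}$ denoting position in the ordering, $L^{(1)}_k(\Phi,V^* )=\frac1{|V^*|}\sum_{v\in V^*}\mathbb{P}(\mathrm{rank}_{\Phi(G_1,\mathfrak{o}(G_2),V^* )}(\mathfrak{o}(v))\ge k+1)$ (recall error) and $L^{(2)}_k(\Phi,V^* )=1-\frac1k\sum_{v\in V^*}\mathbb{P}(\mathrm{rank}_{\Phi(G_1,\mathfrak{o}(G_2),V^* )}(\mathfrak{o}(v))\le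 k)$ (precision error). *)

From HB Require Import structures.
From mathcomp Require Import all_boot all_order all_algebra all_fingroup.
Set Implicit Arguments. Unset Strict Implicit. Unset Printing Implicit Defensive.
Import Order.TTheory GRing.Theory Num.Theory.
Local Open Scope ring_scope.

Definition graphT (T : finType) := {ffun T * T -> bool}.

Definition is_graph (T : finType) (g : graphT T) : bool :=
  [forall x, ~~ g (x, x)] && [forall x, forall y, g (x, y) == g (y, x)].

(* sigma(g): relabel g by the permutation sigma ((x,y) edge of g iff (sigma x, sigma y) edge) *)
Definition permg (T : finType) (s : {perm T}) (g : graphT T) : graphT T :=
  [ffun p => g ((s^-1)%g p.1, (s^-1)%g p.2)].

Definition isomg (T : finType) (g h : graphT T) : bool :=
  [exists s : {perm T}, h == permg s g].

Definition vorbit (T : finType) (u : T) (g : graphT T) : {set T} :=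
  [set v | [exists s : {perm T}, (permg s g == g) && (s u == v)]].

Definition relabel (A B : finType) (o : A -> B) (g : graphT A) : graphT B :=
  [ffun p => [exists x, exists y, [&& o x == p.1, o y == p.2 & g (x, y)]]].

(* V_1 = 'I_n, V_2 = 'I_m; vertex i of V_1 equals vertex i of V_2 iff i < c (the core) *)
Definition in_core (m c : nat) (S : {set 'I_m}) : bool := [forall v in S, (v < c)%N].
Definition junk (k c : nat) : {set 'I_k} := [set i : 'I_k | (c <= i)%N].

(* induced subgraph g[J] (as a relation on the whole vertex type, empty outside J) *)
Definition restrict (T : finType) (J : {set T}) (g : graphT T) : graphT T :=
  [ffun p => [&& p.1 \in J, p.2 \in J & g p]].

Definition pairG (n m : nat) := (graphT 'I_n * graphT 'I_m)%type.

Section Prob.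
Variable R : realFieldType.
Variables n m : nat.

Definition is_distr (F : {ffun pairG n m -> R}) : Prop :=
  (forall x, 0 <= F x) /\ \sum_x F x = 1.

Definition prob (F : {ffun pairG n m -> R}) (E : pred (pairG n m)) : R :=
  \sum_(x | E x) F x.

Definition supported_on (F : {ffun pairG n m -> R}) (E : pred (pairG n m)) : Prop :=
  forall x, ~~ E x -> F x = 0.

(* nominatable distribution F^{(n,m)}_{c,theta} (theta fixed): a distribution on
   G_n x G_m whose junk-induced subgraphs are independent (given the fixed theta) *)
Definition nominatable (c : nat) (F : {ffun pairG n m -> R}) : Prop :=
  [/\ (c <= n)%N, (c <= m)%N, is_distr F,
      supported_on F (fun x => is_graph x.1 && is_graph x.2) &
      forall (a : graphT 'I_n) (b : graphT 'I_m),
        prob F (fun x => (restrict (junk n c) x.1 == a) && (restrict (junk m c) x.2 == b))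
        = prob F (fun x => restrict (junk n c) x.1 == a)
          * prob F (fun x => restrict (junk m c) x.2 == b)].

Definition Ga (Vs : {set 'I_m}) : pred (pairG n m) :=
  fun x => [&& is_graph x.1, is_graph x.2 & [forall v in Vs, vorbit v x.2 == [set v]]].

Variable W : finType.

(* a VN scheme: (g1, o(g2), V^* ) |-> total ordering of W (a duplicate-free enumeration
   of W; the element at 0-based position j has rank j+1) *)
Definition scheme := graphT 'I_n -> graphT W -> {set 'I_m} -> seq W.

Definition is_VN (c : nat) (Phi : scheme) : Prop :=
  (forall g1 gW Vs, is_graph g1 -> is_graph gW -> in_core c Vs ->
     perm_eq (Phi g1 gW Vs) (enum W)) /\
  (forall g1 g2 Vs (u : 'I_m) (o o' : 'I_m -> W),
     is_graph g1 -> is_graph g2 -> in_core c Vs -> injective o -> injective o' ->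
     forall i : nat,
       [exists x in vorbit u g2, index (o x) (Phi g1 (relabel o g2) Vs) == i]
       = [exists x in vorbit u g2, index (o' x) (Phi g1 (relabel o' g2) Vs) == i]).

(* L^{(1)}_k : rank(o v) >= k+1  iff  0-based index >= k *)
Definition L1 (F : {ffun pairG n m -> R}) (o : 'I_m -> W) (Phi : scheme)
    (Vs : {set 'I_m}) (k : nat) : R :=
  (#|Vs|%:R)^-1 * \sum_(v in Vs)
     prob F (fun x => (k <= index (o v) (Phi x.1 (relabel o x.2) Vs))%N).

(* L^{(2)}_k : rank(o v) <= k  iff  0-based index < k *)
Definition L2 (F : {ffun pairG n m -> R}) (o : 'I_m -> W) (Phi : scheme)
    (Vs : {set 'I_m}) (k : nat) : R :=
  1 - (k%:R)^-1 * \sum_(v in Vs)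
     prob F (fun x => (index (o v) (Phi x.1 (relabel o x.2) Vs) < k)%N).

Definition classOf (Vs : {set 'I_m}) (x : pairG n m) : pred (pairG n m) :=
  fun y => [&& Ga Vs y, y.1 == x.1 & isomg x.2 y.2].

(* (g1,[o(g2)])_{w = o(u)} : sigma(o^{-1}(w)) = u  iff  w = o(sigma^{-1}(u)) *)
Definition subEq (o : 'I_m -> W) (Vs : {set 'I_m}) (x : pairG n m) (w : W) (u : 'I_m)
  : pred (pairG n m) :=
  fun y => [&& Ga Vs y, y.1 == x.1 &
     [exists s : {perm 'I_m}, (y.2 == permg s x.2) && (w == o ((s^-1)%g u))]].

Definition subIn (o : 'I_m -> W) (Vs : {set 'I_m}) (x : pairG n m) (w : W)
  : pred (pairG n m) :=
  fun y => [exists u in Vs, subEq o Vs x w u y].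

Definition Pcond (F : {ffun pairG n m -> R}) (o : 'I_m -> W) (Vs : {set 'I_m})
    (x : pairG n m) (w : W) : R :=
  prob F (subIn o Vs x w) / prob F (classOf Vs x).

Definition greedy (P : W -> R) (s : seq W) : Prop :=
  perm_eq s (enum W) /\
  forall (j : nat) (w : W), (j < size s)%N -> w \notin take j s -> P w <= P (nth w s j).

(* Phi^* as constructed in the theorem, for some choice of class representatives
   (rep), tie-breaking, and isomorphisms sigma *)
Definition is_Phi_star (F : {ffun pairG n m -> R}) (o : 'I_m -> W) (Vs : {set 'I_m})
    (Phis : scheme) : Prop :=
  exists rep : pairG n m -> pairG n m,
  [/\ (forall x, Ga Vs x -> classOf Vs x (rep x)),
      (forall x y, Ga Vs x -> classOf Vs x y -> rep y = rep x),
      (forall x, Ga Vs x -> rep x = x ->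
         greedy (Pcond F o Vs x) (Phis x.1 (relabel o x.2) Vs)) &
      (forall x, Ga Vs x -> exists s : {perm W},
         relabel o x.2 = permg s (relabel o (rep x).2) /\
         Phis x.1 (relabel o x.2) Vs = map s (Phis (rep x).1 (relabel o (rep x).2) Vs))].

End Prob.

(* Inside a class (g1, [o(g2)]) the vertices of V^* are fixed by every automorphism, so
   all isomorphisms from the representative to a member agree on V^*.  Since a VN scheme
   is equivariant under relabelling, the rank of o(v) at any member of the class is the
   rank of the transported vertex at the representative.  Summing over the class, the
   expected number of V^* vertices ranked among the first k becomes
   sum_i P(class i) * (P^i-mass of the first k positions of the representative's ordering),
   and the greedy ordering maximises each such mass by an exchange argument.  Both losses
   are decreasing affine functions of that expected number. *)

From HB Require Import structures.
From mathcomp Require Import all_boot all_order all_algebra all_fingroup.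
From mathcomp Require Import zify.
Import Order.TTheory GRing.Theory Num.Theory.
Local Open Scope ring_scope.
Set Implicit Arguments. Unset Strict Implicit. Unset Printing Implicit Defensive.

Section Relabelling.
Variable T : finType.
Implicit Types (g h : graphT T) (s t : {perm T}).

Lemma permgM s t g : permg s (permg t g) = permg (t * s)%g g.
Proof. by apply/ffunP => p; rewrite !ffunE /= invMg !permM. Qed.

Lemma permg1 g : permg 1%g g = g.
Proof. by apply/ffunP => -[x y]; rewrite !ffunE /= invg1 !perm1. Qed.

Lemma permgK s : cancel (permg s) (permg s^-1%g).
Proof. by move=> g; rewrite permgM mulgV permg1. Qed.

Lemma isomg_sym g h : isomg g h -> isomg h g.
Proof. by case/existsP=> s /eqP ->; apply/existsP; exists s^-1%g; rewrite permgK. Qed.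

Lemma vorbit_set1_permgV u g s t :
  vorbit u (permg s g) = [set u] -> permg s g = permg t g -> s^-1%g u = t^-1%g u.
Proof.
move=> rigid est; have : t (s^-1%g u) \in vorbit u (permg s g).
  rewrite inE; apply/existsP; exists (s^-1 * t)%g.
  by rewrite permM permgM mulgA mulgV mul1g est !eqxx.
by rewrite rigid inE => /eqP/(congr1 t^-1%g); rewrite permK.
Qed.

Variable A : finType.
Implicit Types (f : T -> A).

Lemma eq_relabel f f' g : f =1 f' -> relabel f g = relabel f' g.
Proof.
move=> eff'; apply/ffunP => p; rewrite !ffunE.
by apply: eq_existsb => x; apply: eq_existsb => y; rewrite !eff'.
Qed.

Lemma relabel_permg f t g : relabel f (permg t g) = relabel (f \o t) g.
Proof.
apply/ffunP => p; rewrite !ffunE; apply/existsP/existsP.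
- case=> x /existsP [y]; rewrite ffunE /= => /and3P [ex ey gxy].
  by exists (t^-1%g x); apply/existsP; exists (t^-1%g y); rewrite !permKV ex ey.
- case=> x /existsP [y] /and3P [ex ey gxy].
  by exists (t x); apply/existsP; exists (t y); rewrite ffunE /= !permK ex ey.
Qed.

Lemma relabelE f g x y : injective f -> relabel f g (f x, f y) = g (x, y).
Proof.
move=> f_inj; rewrite ffunE; apply/existsP/idP.
- by case=> x' /existsP [y'] /and3P [/eqP /f_inj -> /eqP /f_inj ->].
- by move=> gxy; exists x; apply/existsP; exists y; rewrite !eqxx gxy.
Qed.

Lemma relabel_inj f : injective f -> injective (relabel f).
Proof.
move=> f_inj g h egh; apply/ffunP => -[x y].
by rewrite -(relabelE g _ _ f_inj) -(relabelE h _ _ f_inj) egh.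
Qed.

Lemma is_graph_relabel f g : injective f -> is_graph g -> is_graph (relabel f g).
Proof.
move=> f_inj /andP [/forallP irr /forallP sym]; apply/andP; split.
  apply/forallP => z; rewrite ffunE; apply/existsP => -[x /existsP [y]].
  case/and3P => /eqP /= ex /eqP /= ey; move: ex; rewrite -ey => /f_inj ->.
  by rewrite (negbTE (irr y)).
apply/forallP => z; apply/forallP => z'; rewrite !ffunE; apply/eqP.
by apply/existsP/existsP => -[x /existsP [y] /and3P [ex ey gxy]]; exists y;
  apply/existsP; exists x; rewrite ex ey /= -(eqP (forallP (sym x) y)).
Qed.

End Relabelling.

Lemma permg_relabel (A B : finType) (f : A -> B) (s : {perm B}) (g : graphT A) :
  permg s (relabel f g) = relabel (s \o f) g.
Proof.
apply/ffunP => p; rewrite !ffunE; apply/existsP/existsP;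
  case=> x /existsP [y] /and3P [/eqP ex /eqP ey gxy]; exists x; apply/existsP; exists y.
- by rewrite /= ex ey !permKV !eqxx.
- by rewrite -ex -ey /= !permK !eqxx.
Qed.

Lemma relabel_permg_pullback (A B : finType) (f : A -> B) (s : {perm B}) (g h : graphT A) :
  bijective f -> relabel f h = permg s (relabel f g) ->
  exists t : {perm A}, h = permg t g /\ forall z, f (t z) = s (f z).
Proof.
case=> f' fK f'K eh.
have t_inj : injective (f' \o s \o f) by move=> a b /= /(can_inj f'K) /perm_inj /(can_inj fK).
have ft z : f (perm t_inj z) = s (f z) by rewrite permE /= f'K.
exists (perm t_inj); split => //; apply: (relabel_inj (can_inj fK)).
by rewrite eh permg_relabel relabel_permg; apply: eq_relabel => z /=; rewrite ft.
Qed.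

Lemma ler_sum_dominated (R : numDomainType) (W : finType) (P : W -> R) (S T : {set W}) :
  (forall w, 0 <= P w) -> (#|S| <= #|T|)%N ->
  (forall w w', w \notin T -> w' \in T -> P w <= P w') ->
  \sum_(w in S) P w <= \sum_(w in T) P w.
Proof.
move=> P_ge0 leST dom.
rewrite (big_setID T) [leRHS](big_setID S) /= setIC lerD2l.
have leAB : (#|S :\: T| <= #|T :\: S|)%N.
  by move: leST; rewrite -(cardsID T S) -(cardsID S T) setIC; lia.
set A := S :\: T in leAB *; set B := T :\: S in leAB *.
have [B0 | B_gt0] := posnP #|B|.
  by move: leAB; rewrite B0 leqn0 cards_eq0 => /eqP ->; rewrite big_set0 sumr_ge0.
have double_count : #|B|%:R * \sum_(i in A) P i <= #|A|%:R * \sum_(j in B) P j.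
  rewrite !mulr_sumr; under eq_bigr do rewrite mulr_natl -sumr_const.
  under [leRHS]eq_bigr do rewrite mulr_natl -sumr_const.
  rewrite [leRHS]exchange_big /=; apply: ler_sum => i; rewrite inE => /andP [iT _].
  by apply: ler_sum => j; rewrite inE => /andP [_ jT]; apply: dom.
rewrite -(ler_pM2l (_ : 0 < #|B|%:R)) ?ltr0n //; apply: (le_trans double_count).
by rewrite ler_wpM2r ?sumr_ge0 ?ler_nat.
Qed.

Lemma card_index_lt (W : finType) (L : seq W) k :
  perm_eq L (enum W) -> (k <= #|W|)%N -> #|[set w | (index w L < k)%N]| = k.
Proof.
move=> L_enum kW; have memL w : w \in L by rewrite (perm_mem L_enum) mem_enum.
have -> : [set w | (index w L < k)%N] = [set w in take k L].
  by apply/setP => w; rewrite !inE in_take.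
rewrite cardsE (card_uniqP _) ?take_uniq ?(perm_uniq L_enum) ?enum_uniq //.
by rewrite size_takel // (perm_size L_enum) -cardE.
Qed.

Section TopMass.
Variables (R : realFieldType) (W : finType) (P : W -> R).
Hypothesis P_ge0 : forall w, 0 <= P w.

Definition top_mass (L : seq W) (k : nat) : R := \sum_(w | (index w L < k)%N) P w.

Lemma greedy_top_mass_max (L G : seq W) k :
  perm_eq L (enum W) -> greedy P G -> (k <= #|W|)%N -> top_mass L k <= top_mass G k.
Proof.
move=> L_enum [G_enum G_greedy] kW.
have memG w : w \in G by rewrite (perm_mem G_enum) mem_enum.
have top_set L' : top_mass L' k = \sum_(w in [set w | (index w L' < k)%N]) P w.
  by apply: eq_bigl => w; rewrite inE.
rewrite !top_set; apply: ler_sum_dominated => //; first by rewrite !card_index_lt.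
move=> w w'; rewrite !inE -leqNgt => kw w'k.
have := G_greedy (index w' G) w; rewrite nth_index // in_take // -leqNgt.
by apply; [rewrite index_mem | rewrite ltnW // (leq_trans w'k kw)].
Qed.

End TopMass.

Section Probability.
Variables (R : realFieldType) (n m : nat) (F : {ffun pairG n m -> R}).

Lemma le_prob (E E' : pred (pairG n m)) :
  (forall x, 0 <= F x) -> (forall x, E x -> E' x) -> prob F E <= prob F E'.
Proof.
move=> F_ge0 EE'; rewrite /prob [leLHS]big_mkcond [leRHS]big_mkcond.
by apply: ler_sum => x _; case: (boolP (E x)) => [/EE' -> // | _]; case: ifP.
Qed.

Lemma prob_predC (E : pred (pairG n m)) :
  is_distr F -> prob F (predC E) = 1 - prob F E.
Proof. by case=> _ F1; rewrite /prob -F1 [X in X - _](bigID E) /= addrC addrK. Qed.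

End Probability.

Section ClassDecomposition.
Variables (R : realFieldType) (n m : nat) (W : finType).
Variables (F : {ffun pairG n m -> R}) (Vs : {set 'I_m}) (o : 'I_m -> W).
Hypothesis o_inj : injective o.

Definition rank_equivariant (Phi : scheme n m W) : Prop :=
  forall x t, Ga Vs x -> Ga Vs (x.1, permg t x.2) ->
  {in Vs, forall v, index (o v) (Phi x.1 (relabel o (permg t x.2)) Vs)
                    = index (o (t^-1%g v)) (Phi x.1 (relabel o x.2) Vs)}.

Definition expected_top_hits (Phi : scheme n m W) (k : nat) : R :=
  \sum_(v in Vs) prob F (fun x => (index (o v) (Phi x.1 (relabel o x.2) Vs) < k)%N).

Lemma L1E (Phi : scheme n m W) k :
  is_distr F -> L1 F o Phi Vs k = #|Vs|%:R^-1 * (#|Vs|%:R - expected_top_hits Phi k).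
Proof.
move=> F_distr; rewrite /L1 -sumr_const -sumrB; congr (_ * _); apply: eq_bigr => v _.
by rewrite -prob_predC //; apply: eq_bigl => x; rewrite /= leqNgt.
Qed.

Lemma subIn_classOf (r y : pairG n m) (w : W) : subIn o Vs r w y -> classOf Vs r y.
Proof.
case/existsP=> u /andP [_ /and3P [Gy e1 /existsP [s /andP [/eqP e2 _]]]].
by rewrite /classOf Gy e1; apply/existsP; exists s; rewrite e2.
Qed.

Lemma subIn_permg (r : pairG n m) (w : W) (t : {perm 'I_m}) :
  Ga Vs (r.1, permg t r.2) ->
  subIn o Vs r w (r.1, permg t r.2) = (w \in [set o (t^-1%g v) | v in Vs]).
Proof.
move=> Gy; apply/existsP/imsetP => [[v /andP [vV /and3P [_ _]]] | [v vV ->]].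
  case/existsP=> s /andP [/eqP /= est /eqP ->]; exists v => //; congr o; apply/esym.
  apply: (vorbit_set1_permgV _ est).
  by case/and3P: Gy => _ _ /forallP /(_ v); rewrite vV => /eqP.
by exists v; rewrite vV /subEq Gy eqxx /=; apply/existsP; exists t; rewrite !eqxx.
Qed.

Lemma VN_rank_equivariant c (Phi : scheme n m W) :
  in_core c Vs -> is_VN c Phi -> rank_equivariant Phi.
Proof.
move=> core [_ Phi_inv] x t Gx Gy v vV.
case/and3P: (Gy) => /= g1 g2 /forallP /(_ v); rewrite vV => /eqP rigid.
have ot_inj : injective (o \o t^-1%g) by move=> a b /o_inj /perm_inj.
have relabel_ot : relabel (o \o t^-1%g) (permg t x.2) = relabel o x.2.
  by rewrite relabel_permg; apply: eq_relabel => z /=; rewrite permK.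
set i := index (o v) _.
have := Phi_inv x.1 _ Vs v _ _ g1 g2 core o_inj ot_inj i.
rewrite rigid relabel_ot => ex_eq.
have : [exists v' in [set v], index ((o \o t^-1%g) v') (Phi x.1 (relabel o x.2) Vs) == i].
  by rewrite -ex_eq; apply/existsP; exists v; rewrite inE !eqxx.
by case/existsP=> _ /andP [/set1P -> /eqP <-].
Qed.

Lemma prob_subInE (r : pairG n m) (w : W) :
  (forall x, 0 <= F x) ->
  prob F (subIn o Vs r w) = prob F (classOf Vs r) * Pcond F o Vs r w.
Proof.
move=> F_ge0; rewrite /Pcond; have [D0 | D_neq0] := eqVneq (prob F (classOf Vs r)) 0.
  apply/eqP; rewrite D0 mul0r eq_le sumr_ge0 // andbT -D0.
  by apply: le_prob => // y /subIn_classOf.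
by rewrite mulrC divfK.
Qed.

Variable rep : pairG n m -> pairG n m.
Hypothesis rep_class : forall x, Ga Vs x -> classOf Vs x (rep x).
Hypothesis rep_classE : forall x y, Ga Vs x -> classOf Vs x y -> rep y = rep x.

Lemma classOf_repE (r x : pairG n m) :
  Ga Vs r -> rep r = r -> (Ga Vs x && (rep x == r)) = classOf Vs r x.
Proof.
move=> Gr rr; apply/andP/idP => [[Gx /eqP <-] | rx].
  by case/and3P: (rep_class Gx) => _ e1 /isomg_sym iso; rewrite /classOf Gx eq_sym e1 iso.
by case/and3P: (rx) => Gx _ _; rewrite (rep_classE Gr rx) rr.
Qed.

Lemma sum_by_class (f : pairG n m -> R) :
  (forall x, ~~ Ga Vs x -> f x = 0) ->
  \sum_x f x = \sum_(r | Ga Vs r && (rep r == r)) \sum_(x | classOf Vs r x) f x.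
Proof.
move=> f_supp; rewrite (bigID (Ga Vs)) /= [X in _ + X]big1 ?addr0 //.
rewrite (partition_big rep (fun r => Ga Vs r && (rep r == r))) /=; last first.
  move=> x Gx; have rx := rep_class Gx.
  by case/and3P: (rx) => Grx _ _; rewrite Grx (rep_classE Gx rx) eqxx.
by apply: eq_bigr => r /andP [Gr /eqP rr]; apply: eq_bigl => x; apply: classOf_repE.
Qed.

Lemma top_hits_in_class (Phi : scheme n m W) k r t (a : R) :
  rank_equivariant Phi -> Ga Vs r -> Ga Vs (r.1, permg t r.2) ->
  \sum_(v in Vs | (index (o v) (Phi r.1 (relabel o (permg t r.2)) Vs) < k)%N) a
  = \sum_(w | (index w (Phi r.1 (relabel o r.2) Vs) < k)%N
             && subIn o Vs r w (r.1, permg t r.2)) a.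
Proof.
move=> Phi_eqv Gr Gy; rewrite (eq_bigl (fun v => (v \in Vs) &&
  (index (o (t^-1%g v)) (Phi r.1 (relabel o r.2) Vs) < k)%N)); last first.
  by move=> v; case vV: (v \in Vs); rewrite //= Phi_eqv.
under [RHS]eq_bigl do rewrite subIn_permg // andbC.
by rewrite big_imset_cond // => v v' _ _ /o_inj /perm_inj.
Qed.

Section PhiStar.
Variable Phis : scheme n m W.
Hypothesis o_bij : bijective o.
Hypothesis Phis_transport : forall x, Ga Vs x -> exists s : {perm W},
  relabel o x.2 = permg s (relabel o (rep x).2) /\
  Phis x.1 (relabel o x.2) Vs = map s (Phis (rep x).1 (relabel o (rep x).2) Vs).

Lemma Phi_star_index x : Ga Vs x -> exists t : {perm 'I_m}, x.2 = permg t (rep x).2 /\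
  forall v, index (o v) (Phis x.1 (relabel o x.2) Vs)
            = index (o (t^-1%g v)) (Phis (rep x).1 (relabel o (rep x).2) Vs).
Proof.
move=> Gx; have [s [es Phis_x]] := Phis_transport Gx.
have [t [et ot]] := relabel_permg_pullback o_bij es.
exists t; split => // v; rewrite Phis_x.
by rewrite -{1}(permKV t v) ot index_map //; apply: perm_inj.
Qed.

Lemma Phi_star_rank_equivariant : rank_equivariant Phis.
Proof.
move=> x t Gx Gy v vV; set y := (x.1, permg t x.2) in Gy *.
have xy : classOf Vs x y by rewrite /classOf Gy eqxx; apply/existsP; exists t.
have [tx [ex idx_x]] := Phi_star_index Gx.
have [ty [ey idx_y]] := Phi_star_index Gy.
rewrite (rep_classE Gx xy) in ey idx_y.
rewrite -[x.1]/y.1 [LHS]idx_y idx_x; congr (index (o _) _).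
rewrite -permM -invMg; apply: (vorbit_set1_permgV (g := (rep x).2)).
  by case/and3P: Gy => _ _ /forallP /(_ v); rewrite vV ey => /eqP.
by rewrite -ey /= ex permgM.
Qed.

End PhiStar.

Hypothesis F_supp : supported_on F (Ga Vs).

Lemma expected_top_hits_by_class (Phi : scheme n m W) k :
  rank_equivariant Phi ->
  expected_top_hits Phi k = \sum_(r | Ga Vs r && (rep r == r))
    top_mass (fun w => prob F (subIn o Vs r w)) (Phi r.1 (relabel o r.2) Vs) k.
Proof.
move=> Phi_eqv; rewrite /expected_top_hits /prob.
under eq_bigr do rewrite big_mkcond; rewrite exchange_big /= sum_by_class; last first.
  by move=> x Gx; rewrite F_supp // big1 // => v _; case: ifP.
apply: eq_bigr => r /andP [Gr _]; rewrite /top_mass.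
transitivity (\sum_(y | classOf Vs r y) \sum_(w | (index w (Phi r.1 (relabel o r.2) Vs) < k)%N
                                          && subIn o Vs r w y) F y).
  apply: eq_bigr => y ry; rewrite -big_mkcondr.
  case/and3P: (ry) => Gy /eqP y1 /existsP [t /eqP y2].
  have -> : y = (r.1, permg t r.2) by rewrite -y1 -y2; case: (y).
  by apply: top_hits_in_class => //; rewrite -y1 -y2; case: (y) Gy.
rewrite (exchange_big_dep (fun w => index w (Phi r.1 (relabel o r.2) Vs) < k)%N) /=;
  last by move=> y w _ /andP [].
apply: eq_bigr => w cw; apply: eq_bigl => y; rewrite cw /=.
by apply/andP/idP => [[] | wy]; last rewrite (subIn_classOf wy).
Qed.

Lemma expected_top_hits_le (Phi Phis : scheme n m W) k :
  (forall x, 0 <= F x) -> rank_equivariant Phi -> rank_equivariant Phis ->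
  (forall r, Ga Vs r -> rep r = r -> perm_eq (Phi r.1 (relabel o r.2) Vs) (enum W)) ->
  (forall r, Ga Vs r -> rep r = r -> greedy (Pcond F o Vs r) (Phis r.1 (relabel o r.2) Vs)) ->
  (k <= #|W|)%N -> expected_top_hits Phi k <= expected_top_hits Phis k.
Proof.
move=> F_ge0 Phi_eqv Phis_eqv Phi_enum Phis_greedy kW.
rewrite !expected_top_hits_by_class //; apply: ler_sum => r /andP [Gr /eqP rr].
have top_massE L : top_mass (fun w => prob F (subIn o Vs r w)) L k
                   = prob F (classOf Vs r) * top_mass (Pcond F o Vs r) L k.
  by rewrite /top_mass mulr_sumr; apply: eq_bigr => w _; rewrite prob_subInE.
rewrite !top_massE ler_wpM2l ?sumr_ge0 //.
apply: greedy_top_mass_max; [| exact: Phi_enum | exact: Phis_greedy | exact: kW].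
by move=> w; rewrite divr_ge0 ?sumr_ge0.
Qed.

End ClassDecomposition.

Theorem mainTheorem3 (R : realFieldType) (n m c : nat) (W : finType)
    (F : {ffun pairG n m -> R}) (Vs : {set 'I_m}) (o : 'I_m -> W)
    (Phis : scheme n m W) :
  #|W| = m -> injective o -> in_core c Vs ->
  nominatable c F -> supported_on F (Ga Vs) ->
  is_Phi_star F o Vs Phis ->
  forall (k : nat), (1 <= k)%N -> (k <= m - 1)%N ->
  forall Phi : scheme n m W, is_VN c Phi ->
    L1 F o Phis Vs k <= L1 F o Phi Vs k /\ L2 F o Phis Vs k <= L2 F o Phi Vs k.
Proof.
move=> card_W o_inj core [_ _ F_distr _ _] F_supp.
move=> [rep [rep_class rep_classE Phis_greedy Phis_transport]] k _ k_le Phi Phi_VN.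
have F_ge0 x : 0 <= F x by case: F_distr.
have o_bij : bijective o by apply: inj_card_bij; rewrite // card_ord card_W.
have hits_le : expected_top_hits F Vs o Phi k <= expected_top_hits F Vs o Phis k.
  apply: (expected_top_hits_le o_inj rep_class rep_classE F_supp) => //.
  - exact: VN_rank_equivariant core Phi_VN.
  - exact: (Phi_star_rank_equivariant rep_classE o_bij Phis_transport).
  - by move=> r /and3P [g1 g2 _] _; apply: Phi_VN.1 => //; apply: is_graph_relabel.
  - by rewrite card_W; lia.
have inv_ge0 (j : nat) : 0 <= j%:R^-1 :> R by rewrite invr_ge0 ler0n.
split; last by rewrite /L2 lerD2l lerN2 ler_wpM2l.
by rewrite !L1E // ler_wpM2l // lerD2l lerN2.
Qed.
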